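(* Let $M$ be a finite index set with positive, not necessarily normalized, weights $w^r>0$ for $r\in M$. Put $\eta=\sum_{r\in M}w^r$ and $\mathcal{H}=-\sum_{r\in M}\frac{w^r}{\eta}\log\big(\frac{w^r}{\eta}\big)$. Let $M^s\subseteq M$ be nonempty with $|\neg M^s|>2$, where $\neg M^s=M\setminus M^s$. Define $w^{m,s}=\sum_{m\in M^s}w^m$, $w^{s,r}=w^r/w^{m,s}$ for $r\in M^s$, and $\mathcal{H}^s=-\sum_{r\in M^s}w^{s,r}\log(w^{s,r})$. Let $\mathcal{LB}[\eta]$ and $\mathcal{UB}[\eta]$ be real numbers with $0<\mathcal{LB}[\eta]\le\eta\le\mathcal{UB}[\eta]$, and set $$\bar\gamma=1-\sum_{r\in M^s}\frac{w^r}{\mathcal{UB}[\eta]}.$$ Then $\mathcal{LB}[\mathcal{H}]\le\mathcal{H}\le\mathcal{UB}[\mathcal{H}]$, where $$\mathcal{LB}[\mathcal{H}]=\frac{w^{m,s}}{\mathcal{UB}[\eta]}\Big[\mathcal{H}^s+\log\Big(\frac{\mathcal{LB}[\eta]}{w^{m,s}}\Big)\Big],$$ $$\mathcal{UB}[\mathcal{H}]=\frac{w^{m,s}}{\mathcal{LB}[\eta]}\Big[\mathcal{H}^s+\log\Big(\frac{\mathcal{UB}[\eta]}{w^{m,s}}\Big)\Big]-\bar\gamma\log\Big(\frac{\bar\gamma}{|\neg M^s|}\Big).$$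
   Context: Setting: a node of a planning belief tree holds a mixture belief with component set $M$ (data-association hypotheses) and unnormalized weights $w^r$. The cost $\mathcal{H}$ is the Shannon entropy of the normalized weights. The subset $M^s$ defines a simplified belief with renormalized weights $w^{s,r}$ and entropy $\mathcal{H}^s$. Computing $\eta$ requires all weights, so only lower and upper bounds $\mathcal{LB}[\eta]$ and $\mathcal{UB}[\eta]$ on it are assumed to be available. All logarithms use the same base. *)

From HB Require Import structures.
From mathcomp Require Import all_boot all_order all_algebra.
From mathcomp Require Import all_classical all_reals all_analysis.
Set Implicit Arguments. Unset Strict Implicit. Unset Printing Implicit Defensive.
Import Order.TTheory GRing.Theory Num.Theory.
Local Open Scope ring_scope.

Section Defs.
Variables (R : realType) (T : finType).

(* logarithm in base b (the common base of all logarithms) *)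
Definition logb (b x : R) : R := ln x / ln b.

Definition eta_tot (w : T -> R) (M : {set T}) : R := \sum_(r in M) w r.

Definition Hent (b : R) (w : T -> R) (M : {set T}) : R :=
  - \sum_(r in M) (w r / eta_tot w M) * logb b (w r / eta_tot w M).

Definition wms (w : T -> R) (Ms : {set T}) : R := \sum_(m in Ms) w m.

Definition Hs (b : R) (w : T -> R) (Ms : {set T}) : R :=
  - \sum_(r in Ms) (w r / wms w Ms) * logb b (w r / wms w Ms).

Definition gbar (w : T -> R) (Ms : {set T}) (UBeta : R) : R :=
  1 - \sum_(r in Ms) w r / UBeta.

Definition LB_H (b : R) (w : T -> R) (Ms : {set T}) (LBeta UBeta : R) : R :=
  wms w Ms / UBeta * (Hs b w Ms + logb b (LBeta / wms w Ms)).

Definition UB_H (b : R) (w : T -> R) (M Ms : {set T}) (LBeta UBeta : R) : R :=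
  wms w Ms / LBeta * (Hs b w Ms + logb b (UBeta / wms w Ms))
  - gbar w Ms UBeta * logb b (gbar w Ms UBeta / #|M :\: Ms|%:R).

End Defs.

From Pilot Require Import Defs.
From HB Require Import structures.
From mathcomp Require Import all_boot all_order all_algebra.
From mathcomp Require Import all_classical all_reals all_analysis.
From mathcomp Require Import ring lra.
Set Implicit Arguments. Unset Strict Implicit. Unset Printing Implicit Defensive.
Import Order.TTheory GRing.Theory Num.Theory.
Local Open Scope ring_scope.

(* Write eta = W + V, where W and V are the total weights of M^s and of its
   complement. Grouping the components of M^s gives
   H = W/eta (H^s + log (eta/W)) + H_c, with H_c >= 0 the contribution of the
   complement; the bracket is nonnegative, so bounding eta by LB[eta] and
   UB[eta] controls the first term from both sides. By Gibbs' inequality H_c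
   is at most the entropy -p log (p/n) of spreading the mass p = V/eta
   uniformly over the n = |not M^s| components, and p <= gamma_bar <= 1;
   since n >= 3 > e, the map p |-> -p log (p/n) is nondecreasing on (0, 1]. *)

Lemma ln_le_subr1 (R : realType) (x : R) : 0 < x -> ln x <= x - 1.
Proof.
move=> x_gt0; have := @le_ln1Dx R (x - 1).
by rewrite addrCA subrr addr0; apply; lra.
Qed.

Lemma mul_ln_div_le (R : realType) (p q : R) : 0 < p -> 0 < q ->
  p * ln (q / p) <= q - p.
Proof.
move=> p_gt0 q_gt0; have := ln_le_subr1 (divr_gt0 q_gt0 p_gt0).
rewrite -(ler_pM2l p_gt0) => /le_trans; apply.
by rewrite mulrBr mulrCA divff ?gt_eqF // !mulr1.
Qed.

Lemma ln3_ge1 (R : realType) : 1 <= ln (3 : R).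
Proof.
have ln56 : 6 * ln (5 / 6 : R) <= -1 by have := @mul_ln_div_le R 6 5; lra.
have ln65 : ln (6 / 5 : R) = - ln (5 / 6).
  by rewrite -lnV ?posrE ?invf_div; lra.
have : ln ((6 / 5 : R) ^+ 6) <= ln 3.
  by rewrite ler_ln ?posrE ?exprn_gt0 // !exprS expr0; lra.
rewrite lnXn; last lra.
by rewrite ln65; lra.
Qed.

Lemma ln_leN1 (R : realType) (x : R) : 0 < x -> 3 * x <= 1 -> ln x <= -1.
Proof.
move=> x_gt0 x_le; have := ln3_ge1 R.
have : ln x <= ln (3^-1) by rewrite ler_ln ?posrE ?invr_gt0 //; lra.
by rewrite lnV ?posrE //; lra.
Qed.

Section Logb.
Variables (R : realType) (b : R).
Hypothesis b_gt1 : 1 < b.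

Let lnb_gt0 : 0 < ln b. Proof. exact: ln_gt0. Qed.

Lemma logb_div (x y : R) : 0 < x -> 0 < y ->
  logb b (x / y) = logb b x - logb b y.
Proof. by move=> x_gt0 y_gt0; rewrite /logb ln_div ?posrE // mulrBl. Qed.

Lemma ler_logb (x y : R) : 0 < x -> 0 < y -> (logb b x <= logb b y) = (x <= y).
Proof. by move=> x_gt0 y_gt0; rewrite ler_pM2r ?invr_gt0 // ler_ln. Qed.

Lemma logb_le0 (x : R) : x <= 1 -> logb b x <= 0.
Proof. by move=> x_le1; rewrite /logb pmulr_lle0 ?invr_gt0 // ln_le0. Qed.

Lemma logb_ge0 (x : R) : 1 <= x -> 0 <= logb b x.
Proof. by move=> x_ge1; rewrite /logb pmulr_lge0 ?invr_gt0 // ln_ge0. Qed.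

Lemma gibbs_logb (T : finType) (A : {set T}) (p q : T -> R) :
  (forall r, r \in A -> 0 < p r) -> (forall r, r \in A -> 0 < q r) ->
  \sum_(r in A) q r <= \sum_(r in A) p r ->
  \sum_(r in A) p r * logb b (q r) <= \sum_(r in A) p r * logb b (p r).
Proof.
move=> p_gt0 q_gt0 sum_qp; rewrite -subr_le0 -sumrB.
apply: (@le_trans _ _ (\sum_(r in A) (q r - p r) / ln b)).
  apply: ler_sum => r rA; rewrite -mulrBr -logb_div ?p_gt0 ?q_gt0 //.
  by rewrite /logb mulrA ler_pM2r ?invr_gt0 // mul_ln_div_le ?p_gt0 ?q_gt0.
by rewrite -mulr_suml pmulr_lle0 ?invr_gt0 // sumrB subr_le0.
Qed.

Lemma ler_mul_logb_div (x y n : R) : 0 < x -> x <= y -> 0 < n ->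
  ln (y / n) <= -1 -> y * logb b (y / n) <= x * logb b (x / n).
Proof.
move=> x_gt0 le_xy n_gt0; have y_gt0 : 0 < y := lt_le_trans x_gt0 le_xy.
rewrite /logb !mulrA ler_pM2r ?invr_gt0 // !ln_div ?posrE // => lnyn.
have := mul_ln_div_le x_gt0 y_gt0; rewrite ln_div ?posrE //.
have : 0 <= (y - x) * (- 1 - (ln y - ln n)) by apply: mulr_ge0; lra.
nra.
Qed.

End Logb.

Section PartialEntropy.
Variables (R : realType) (T : finType) (b : R) (w : T -> R).
Hypothesis b_gt1 : 1 < b.

(* Contribution of the components in A to the entropy of the weights
   normalized by d; [Hent b w M] and [Hs b w Ms] are, by definition,
   [Hpart M (eta_tot w M)] and [Hpart Ms (wms w Ms)]. *)
Definition Hpart (A : {set T}) (d : R) : R :=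
  - \sum_(r in A) (w r / d) * logb b (w r / d).

Lemma Hpart_setID (A B : {set T}) (d : R) : B \subset A ->
  Hpart A d = Hpart B d + Hpart (A :\: B) d.
Proof. by move=> sBA; rewrite /Hpart (big_setID B) /= (finset.setIidPr sBA) opprD. Qed.

Lemma w_le_wms (A : {set T}) (x : T) : (forall r, r \in A -> 0 <= w r) ->
  x \in A -> w x <= wms w A.
Proof.
move=> w_ge0 xA; rewrite /wms (bigD1 x) //= lerDl.
by apply: sumr_ge0 => r /andP[/w_ge0].
Qed.

Lemma wms_gt0 (A : {set T}) : (forall r, r \in A -> 0 < w r) ->
  A != finset.set0 -> 0 < wms w A.
Proof.
move=> w_gt0 /finset.set0Pn[x xA]; apply: (lt_le_trans (w_gt0 x xA)).
by apply: w_le_wms => // r /w_gt0/ltW.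
Qed.

Lemma Hpart_ge0 (A : {set T}) (d : R) :
  (forall r, r \in A -> 0 < w r <= d) -> 0 <= Hpart A d.
Proof.
move=> w_bnd; rewrite oppr_ge0; apply: sumr_le0 => r /w_bnd /andP[w_gt0 w_le].
have d_gt0 : 0 < d := lt_le_trans w_gt0 w_le.
apply: mulr_ge0_le0; first by rewrite divr_ge0 ?ltW.
by rewrite logb_le0 // ler_pdivrMr ?mul1r.
Qed.

(* the grouping rule of entropy *)
Lemma Hpart_rescale (A : {set T}) (d : R) : 0 < d ->
  (forall r, r \in A -> 0 < w r) -> 0 < wms w A ->
  Hpart A d = wms w A / d * (Hpart A (wms w A) + logb b (d / wms w A)).
Proof.
set W := wms w A => d_gt0 w_gt0 W_gt0.
have split_term r : r \in A -> w r / d * logb b (w r / d) =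
    W / d * (w r / W * logb b (w r / W)) - w r / d * logb b (d / W).
  move=> rA; have -> : logb b (w r / d) = logb b (w r / W) - logb b (d / W).
    by rewrite -logb_div ?divr_gt0 ?w_gt0 //; congr logb; field; rewrite !gt_eqF.
  by field; rewrite !gt_eqF.
rewrite /Hpart (eq_bigr _ split_term) sumrB -mulr_sumr -mulr_suml -mulr_suml.
by rewrite mulrDr mulrN opprB addrC.
Qed.

Lemma Hpart_le_uniform (A : {set T}) (d : R) : 0 < d ->
  (forall r, r \in A -> 0 < w r) -> A != finset.set0 ->
  Hpart A d <= - (wms w A / d * logb b (wms w A / d / #|A|%:R)).
Proof.
move=> d_gt0 w_gt0 A_neq0; set W := wms w A; set q := W / d / #|A|%:R.
have A_gt0 : (0 < #|A|)%N by rewrite card_gt0.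
have q_gt0 : 0 < q by rewrite !divr_gt0 ?ltr0n ?wms_gt0.
have sum_wd : \sum_(r in A) w r / d = W / d by rewrite -mulr_suml.
rewrite /Hpart lerN2 -{1}sum_wd mulr_suml.
apply: gibbs_logb => // [r /w_gt0 w_gt0r|]; first exact: divr_gt0.
rewrite sumr_const sum_wd -mulr_natr /q mulfVK //.
by rewrite pnatr_eq0 -lt0n.
Qed.

End PartialEntropy.

Section EntropyBounds.
Variables (R : realType) (T : finType) (b : R) (w : T -> R).
Variables (M Ms : {set T}) (LBeta UBeta : R).
Hypotheses (b_gt1 : 1 < b) (w_gt0 : forall r, r \in M -> 0 < w r).
Hypotheses (sMsM : Ms \subset M) (Ms_neq0 : Ms != finset.set0).
Hypothesis Mc_gt2 : (2 < #|M :\: Ms|)%N.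
Hypotheses (LBeta_gt0 : 0 < LBeta) (LBeta_le : LBeta <= eta_tot w M).
Hypothesis UBeta_ge : eta_tot w M <= UBeta.

Local Notation Mc := (M :\: Ms).
Local Notation W := (wms w Ms).
Local Notation V := (wms w Mc).
Local Notation eta := (eta_tot w M).
Local Notation gbar := (gbar w Ms UBeta).

Let wMs_gt0 r : r \in Ms -> 0 < w r.
Proof. by move=> /(fintype.subsetP sMsM)/w_gt0. Qed.

Let wMc_gt0 r : r \in Mc -> 0 < w r.
Proof. by move=> /finset.setDP[/w_gt0]. Qed.

Let Mc_neq0 : Mc != finset.set0.
Proof. by rewrite -card_gt0; apply: leq_trans Mc_gt2. Qed.

Let W_gt0 : 0 < W. Proof. exact: wms_gt0. Qed.
Let V_gt0 : 0 < V. Proof. exact: wms_gt0. Qed.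

Let eta_split : eta = W + V.
Proof. by rewrite /eta_tot /wms (big_setID Ms) /= (finset.setIidPr sMsM). Qed.

Let eta_gt0 : 0 < eta. Proof. by rewrite eta_split addr_gt0. Qed.
Let UBeta_gt0 : 0 < UBeta. Proof. exact: lt_le_trans UBeta_ge. Qed.

Let gbarE : gbar = 1 - W / UBeta.
Proof. by rewrite /Defs.gbar -mulr_suml. Qed.

Lemma Hent_decomp : Hent b w M =
  W / eta * (Hs b w Ms + logb b (eta / W)) + Hpart b w Mc eta.
Proof.
have -> : Hent b w M = Hpart b w M eta by [].
by rewrite (Hpart_setID b w eta sMsM) Hpart_rescale.
Qed.

Lemma Hs_logb_ge0 : 0 <= Hs b w Ms + logb b (eta / W).
Proof.
apply: addr_ge0; last by rewrite logb_ge0 // ler_pdivlMr // mul1r eta_split lerDl ltW.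
apply: (Hpart_ge0 b_gt1) => r rMs; rewrite wMs_gt0 //=.
by apply: w_le_wms => // x /wMs_gt0/ltW.
Qed.

Lemma LB_H_le_Hent : LB_H b w Ms LBeta UBeta <= Hent b w M.
Proof.
rewrite Hent_decomp /LB_H; have X_ge0 := Hs_logb_ge0.
set X := Hs b w Ms + logb b (eta / W) in X_ge0 *.
have Hc_ge0 : 0 <= Hpart b w Mc eta.
  apply: (Hpart_ge0 b_gt1) => r rMc; rewrite wMc_gt0 //= eta_split.
  by rewrite (le_trans (w_le_wms _ rMc)) ?lerDr ?ltW // => x /wMc_gt0/ltW.
have logb_LB : logb b (LBeta / W) <= logb b (eta / W).
  by rewrite ler_logb ?divr_gt0 // ler_pM2r ?invr_gt0.
have W_U_eta : W / UBeta <= W / eta by rewrite ler_pM2l // lef_pV2 ?posrE.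
have LB_X : W / UBeta * (Hs b w Ms + logb b (LBeta / W)) <= W / UBeta * X.
  by apply: ler_wpM2l; [rewrite divr_ge0 ?ltW | rewrite /X lerD2l].
have := ler_wpM2r X_ge0 W_U_eta; lra.
Qed.

Lemma Hent_le_UB_H : Hent b w M <= UB_H b w M Ms LBeta UBeta.
Proof.
rewrite Hent_decomp /UB_H; apply: lerD.
  have W_eta_LB : W / eta <= W / LBeta by rewrite ler_pM2l // lef_pV2 ?posrE.
  have X_UB : Hs b w Ms + logb b (eta / W) <= Hs b w Ms + logb b (UBeta / W).
    by rewrite lerD2l ler_logb ?divr_gt0 // ler_pM2r ?invr_gt0.
  have := ler_wpM2r Hs_logb_ge0 W_eta_LB.
  have := ler_wpM2l (divr_ge0 (ltW W_gt0) (ltW LBeta_gt0)) X_UB; lra.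
set n := #|Mc|%:R.
have n_ge3 : 3 <= n by rewrite (ler_nat R 3).
have n_gt0 : 0 < n by rewrite ltr0n card_gt0.
have W_U_eta : W / UBeta <= W / eta by rewrite ler_pM2l // lef_pV2 ?posrE.
have V_le_gbar : V / eta <= gbar.
  have -> : V = eta - W by rewrite eta_split addrC addKr.
  by rewrite gbarE mulrBl divff ?gt_eqF // lerD2l lerN2.
have gbar_gt0 : 0 < gbar := lt_le_trans (divr_gt0 V_gt0 eta_gt0) V_le_gbar.
have gbar_le1 : gbar <= 1 by rewrite gbarE gerBl divr_ge0 ?ltW.
apply: (le_trans (Hpart_le_uniform b_gt1 eta_gt0 wMc_gt0 Mc_neq0)).
rewrite lerN2 ler_mul_logb_div ?divr_gt0 //.
apply: (@ln_leN1 _ (gbar / n)); first exact: divr_gt0.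
by rewrite mulrA ler_pdivrMr // mul1r; lra.
Qed.

End EntropyBounds.

Theorem theorem2 (R : realType) (T : finType) (b : R) (w : T -> R)
    (M Ms : {set T}) (LBeta UBeta : R) :
  1 < b ->
  (forall r, r \in M -> 0 < w r) ->
  Ms \subset M ->
  Ms != finset.set0 ->
  (2 < #|M :\: Ms|)%N ->
  0 < LBeta -> LBeta <= eta_tot w M -> eta_tot w M <= UBeta ->
  LB_H b w Ms LBeta UBeta <= Hent b w M /\
  Hent b w M <= UB_H b w M Ms LBeta UBeta.
Proof. by move=> *; split; [exact: LB_H_le_Hent | exact: Hent_le_UB_H]. Qed.
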